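(* Let $\mathcal L=(\Sigma,X)$ be a language and $\Lambda$ a fuzzy theory in $\mathcal L$. Let $\sim_\Lambda$ be the relation on $\mathrm{Terms}(\mathcal L)$ given by $t\sim_\Lambda s$ iff $\vdash_\Lambda t\equiv s$; let $\mathrm{Terms}_\Lambda=\mathrm{Terms}(\mathcal L)/\sim_\Lambda$, $\mu_\Lambda([t])=\sup\{l\in H\mid\ \vdash_\Lambda\mathsf E_l(t)\}$, $c^{\mathcal T_\Lambda}=[c]$ for $c\in C$, and $f^{\mathcal T_\Lambda}([t_1],\dots,[t_n])=[f(t_1,\dots,t_n)]$ for $f\in O$, $n=\mathrm{ar}(f)$; let $\iota_{can}:X\to\mathrm{Terms}_\Lambda$, $x\mapsto[x]$. Then $\sim_\Lambda$ is an equivalence relation, $\mathcal T_\Lambda=((\mathrm{Terms}_\Lambda,\mu_\Lambda),\Sigma^{\mathcal T_\Lambda})$ is a well-defined $\Sigma$-algebra, and: (1) for every formula $\phi$, the following are equivalent: (a) $\mathcal T_\Lambda\vDash\phi$; (b) $\mathcal T_\Lambda\vDash_{\iota_{can}}\phi$; (c) $\vdash_\Lambda\phi$; (2) for every assignment $\iota:X\to\mathrm{Terms}_\Lambda$, every section $\sigma$ of the quotient map $\mathrm{Terms}(\mathcal L)\to\mathrm{Terms}_\Lambda$ and every formula $\phi$: $\mathcal T_\Lambda\vDash_\iota\phi$ iff $\vdash_\Lambda\phi[\sigma\circ\iota]$; (3) $\mathcal T_\Lambda$ is a model of $\Lambda$.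
   Context: $H$ is a frame with bottom $\bot$. An $H$-fuzzy set is a pair $(A,\mu_A)$ of a set $A$ and a function $\mu_A:A\to H$; an arrow $f:(A,\mu_A)\to(B,\mu_B)$ is a function with $\mu_A(x)\le\mu_B(f(x))$; they form $\mathbf{Fuz}_H$. For $n\ge1$, $(A,\mu_A)^n=(A^n,\mu)$ with $\mu(a_1,\dots,a_n)=\bigwedge_i\mu_A(a_i)$. A signature $\Sigma=(O,\mathrm{ar},C)$ consists of a set $O$ of operation symbols with arity $\mathrm{ar}:O\to\{1,2,3,\dots\}$ and a set $C$ of constant symbols. A language is a pair $\mathcal L=(\Sigma,X)$ with $X$ a set of variables. $\mathrm{Terms}(\mathcal L)$ is the smallest set containing $X\sqcup C$ and containing $f(t_1,\dots,t_{\mathrm{ar}(f)})$ whenever $f\in O$ and all $t_i\in\mathrm{Terms}(\mathcal L)$. A formula is either an equation $s\equiv t$ ($s,t$ terms) or a membership proposition $\mathsf E_l(t)$ with $l\in H$ and $t$ a term. A sequent $\Gamma\vdash\psi$ is a pair of a (possibly infinite) set $\Gamma$ of formulas and a formula $\psi$; $\vdash\psi$ means $\emptyset\vdash\psi$. A fuzzy theory in $\mathcal L$ is a set of sequents. For $\sigma:X\to\mathrm{Terms}(\mathcal L)$, $t[\sigma]$ is simultaneous substitution, extended to formulas by $(s\equiv t)[\sigma]=(s[\sigma]\equiv t[\sigma])$, $\mathsf E_l(t)[\sigma]=\mathsf E_l(t[\sigma])$, and to sets of formulas elementwise. The rules of the fuzzy sequent calculus are (for all sets of formulas $\Gamma,\Delta,\Phi$,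 formulas $\phi,\psi$, terms, $l,l'\in H$): (A) $\Gamma\vdash\phi$ if $\phi\in\Gamma$; (Weak) from $\Gamma\vdash\phi$ infer $\Gamma\cup\Delta\vdash\phi$; (Cut) from $\Gamma\vdash\phi$ for all $\phi\in\Phi$ and $\Phi\vdash\psi$ infer $\Gamma\vdash\psi$; (Refl) $\Gamma\vdash s\equiv s$; (Sym) from $\Gamma\vdash s\equiv t$ infer $\Gamma\vdash t\equiv s$; (Trans) from $\Gamma\vdash s\equiv t$ and $\Gamma\vdash t\equiv u$ infer $\Gamma\vdash s\equiv u$; (Sub) from $\Gamma\vdash\psi$ infer $\Gamma[\sigma]\vdash\psi[\sigma]$ for any $\sigma:X\to\mathrm{Terms}(\mathcal L)$; (Cong) for $f\in O$ with $n=\mathrm{ar}(f)$, from $\Gamma\vdash t_i\equiv s_i$ ($i=1,\dots,n$) infer $\Gamma\vdash f(t_1,\dots,t_n)\equiv f(s_1,\dots,s_n)$; (Inf) $\Gamma\vdash\mathsf E_\bot(t)$; (Mon) from $\Gamma\vdash\mathsf E_l(t)$ infer $\Gamma\vdash\mathsf E_{l\wedge l'}(t)$; (Exp) for $f\in O$ with $n=\mathrm{ar}(f)$, from $\Gamma\vdash\mathsf E_{l_i}(t_i)$ ($i=1,\dots,n$) infer $\Gamma\vdash\mathsf E_{l_1\wedge\dots\wedge l_n}(f(t_1,\dots,t_n))$; (Sup) for $S\subseteq H$, from $\Gamma\vdash\mathsf E_l(t)$ for all $l\in S$ infer $\Gamma\vdash\mathsf E_{\sup S}(t)$; (Fun)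 from $\Gamma\vdash t\equiv s$ and $\Gamma\vdash\mathsf E_l(t)$ infer $\Gamma\vdash\mathsf E_l(s)$. The deductive closure $\Lambda^{\vdash}$ of a theory $\Lambda$ is the smallest set of sequents containing $\Lambda$ and closed under all these rules; $\vdash_\Lambda\phi$ means $(\emptyset\vdash\phi)\in\Lambda^{\vdash}$. A $\Sigma$-algebra $\mathcal A=((A,\mu_A),\Sigma^{\mathcal A})$ is an $H$-fuzzy set $(A,\mu_A)$ together with, for each $f\in O$, an arrow $f^{\mathcal A}:(A,\mu_A)^{\mathrm{ar}(f)}\to(A,\mu_A)$ of $\mathbf{Fuz}_H$ and, for each $c\in C$, an element $c^{\mathcal A}\in A$. An assignment is a function $\iota:X\to A$; evaluation: $x^{\mathcal A,\iota}=\iota(x)$, $c^{\mathcal A,\iota}=c^{\mathcal A}$, $f(t_1,\dots,t_n)^{\mathcal A,\iota}=f^{\mathcal A}(t_1^{\mathcal A,\iota},\dots,t_n^{\mathcal A,\iota})$. $\mathcal A\vDash_\iota s\equiv t$ iff $s^{\mathcal A,\iota}=t^{\mathcal A,\iota}$; $\mathcal A\vDash_\iota\mathsf E_l(t)$ iff $l\le\mu_A(t^{\mathcal A,\iota})$; $\mathcal A\vDash\phi$ iff $\mathcal A\vDash_\iota\phi$ for all assignments $\iota$. $\mathcal A$ satisfies $\Gamma\vdash\psi$ if for every assignment $\iota$ with $\mathcal A\vDash_\iota\phi$ for all $\phi\in\Gamma$ one has $\mathcal A\vDash_\iota\psi$. $\mathcal A$ is a model of a theory $\Lambda$ if it satisfies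 every sequent of $\Lambda$. *)

From mathcomp Require Import ssreflect ssrfun ssrbool eqtype ssrnat fintype.
From Stdlib Require Import ClassicalEpsilon.

Set Implicit Arguments.
Unset Strict Implicit.
Unset Printing Implicit Defensive.

Record frame := Frame {
  fcar :> Type;
  fle : fcar -> fcar -> Prop;
  fmeet2 : fcar -> fcar -> fcar;
  fsup : (fcar -> Prop) -> fcar;
  fbot : fcar;
  fle_refl : forall a, fle a a;
  fle_trans : forall a b c, fle a b -> fle b c -> fle a c;
  fle_antisym : forall a b, fle a b -> fle b a -> a = b;
  fmeet2_lb1 : forall a b, fle (fmeet2 a b) a;
  fmeet2_lb2 : forall a b, fle (fmeet2 a b) b;
  fmeet2_glb : forall a b c, fle c a -> fle c b -> fle c (fmeet2 a b);
  fsup_ub : forall (S : fcar -> Prop) a, S a -> fle a (fsup S);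
  fsup_lub : forall (S : fcar -> Prop) b, (forall a, S a -> fle a b) -> fle (fsup S) b;
  fbot_least : forall a, fle fbot a;
  fdistr : forall a (S : fcar -> Prop),
    fmeet2 a (fsup S) = fsup (fun b => exists s, S s /\ b = fmeet2 a s)
}.

Definition fmeet (H : frame) n (g : 'I_n -> H) : H :=
  fsup (fun l => forall i, fle l (g i)).

Record signature := Signature {
  sO : Type;
  sar : sO -> nat;
  sar_pos : forall f, 0 < sar f;
  sC : Type
}.

Inductive term (S : signature) (X : Type) : Type :=
  | Var : X -> term S X
  | Cst : sC S -> term S X
  | App : forall f : sO S, ('I_(sar f) -> term S X) -> term S X.
Arguments Var {S X}.
Arguments Cst {S X}.
Arguments App {S X}.

Inductive formula (H : frame) (S : signature) (X : Type) : Type :=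
  | FEq : term S X -> term S X -> formula H S X
  | FMem : H -> term S X -> formula H S X.
Arguments FEq {H S X}.
Arguments FMem {H S X}.

Definition fset H S X := formula H S X -> Prop.
Definition theory H S X := fset H S X -> formula H S X -> Prop.

Definition emptyset {H S X} : fset H S X := fun _ => False.
Definition funion {H S X} (A B : fset H S X) : fset H S X := fun p => A p \/ B p.

Fixpoint tsubst {S X} (s : X -> term S X) (t : term S X) : term S X :=
  match t with
  | Var x => s x
  | Cst c => Cst c
  | App f ts => App f (fun i => tsubst s (ts i))
  end.

Definition fsubst {H S X} (s : X -> term S X) (p : formula H S X) : formula H S X :=
  match p with
  | FEq a b => FEq (tsubst s a) (tsubst s b)
  | FMem l a => FMem l (tsubst s a)
  end.

Definition ssubst {H S X} (s : X -> term S X) (G : fset H S X) : fset H S X :=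
  fun q => exists p, G p /\ q = fsubst s p.

Inductive derivable {H : frame} {S : signature} {X : Type} (L : theory H S X) :
    fset H S X -> formula H S X -> Prop :=
  | D_theory : forall G p, L G p -> derivable L G p
  | D_A : forall G p, G p -> derivable L G p
  | D_Weak : forall G D p, derivable L G p -> derivable L (funion G D) p
  | D_Cut : forall G P q, (forall p, P p -> derivable L G p) ->
      derivable L P q -> derivable L G q
  | D_Refl : forall G s, derivable L G (FEq s s)
  | D_Sym : forall G s t, derivable L G (FEq s t) -> derivable L G (FEq t s)
  | D_Trans : forall G s t u, derivable L G (FEq s t) -> derivable L G (FEq t u) ->
      derivable L G (FEq s u)
  | D_Sub : forall G p (sg : X -> term S X), derivable L G p ->
      derivable L (ssubst sg G) (fsubst sg p)
  | D_Cong : forall G (f : sO S) (ts ss : 'I_(sar f) -> term S X),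
      (forall i, derivable L G (FEq (ts i) (ss i))) ->
      derivable L G (FEq (App f ts) (App f ss))
  | D_Inf : forall G t, derivable L G (FMem (fbot H) t)
  | D_Mon : forall G l l' t, derivable L G (FMem l t) ->
      derivable L G (FMem (fmeet2 l l') t)
  | D_Exp : forall G (f : sO S) (ls : 'I_(sar f) -> H) (ts : 'I_(sar f) -> term S X),
      (forall i, derivable L G (FMem (ls i) (ts i))) ->
      derivable L G (FMem (fmeet ls) (App f ts))
  | D_Sup : forall G (Sl : H -> Prop) t, (forall l, Sl l -> derivable L G (FMem l t)) ->
      derivable L G (FMem (fsup Sl) t)
  | D_Fun : forall G t s l, derivable L G (FEq t s) -> derivable L G (FMem l t) ->
      derivable L G (FMem l s).

Definition provable {H S X} (L : theory H S X) (p : formula H S X) : Prop :=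
  derivable L emptyset p.

Record prealgebra (H : frame) (S : signature) := PreAlgebra {
  acar : Type;
  amu : acar -> H;
  aop : forall f : sO S, ('I_(sar f) -> acar) -> acar;
  acst : sC S -> acar
}.
Arguments amu {H S} _ _.
Arguments aop {H S} _ _ _.
Arguments acst {H S} _ _.

(* each f^A is an arrow (A,mu)^n -> (A,mu) of Fuz_H *)
Definition is_algebra {H S} (A : prealgebra H S) : Prop :=
  forall (f : sO S) (a : 'I_(sar f) -> acar A),
    fle (fmeet (fun i => amu A (a i))) (amu A (aop A f a)).

Fixpoint eval {H S X} (A : prealgebra H S) (io : X -> acar A) (t : term S X) : acar A :=
  match t with
  | Var x => io x
  | Cst c => acst A c
  | App f ts => aop A f (fun i => eval io (ts i))
  end.

Definition sat_at {H S X} (A : prealgebra H S) (io : X -> acar A) (p : formula H S X) : Prop :=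
  match p with
  | FEq s t => eval io s = eval io t
  | FMem l t => fle l (amu A (eval io t))
  end.

Definition sat {H S X} (A : prealgebra H S) (p : formula H S X) : Prop :=
  forall io : X -> acar A, sat_at io p.

Definition sat_seq {H S X} (A : prealgebra H S) (G : fset H S X) (p : formula H S X) : Prop :=
  forall io : X -> acar A, (forall q, G q -> sat_at io q) -> sat_at io p.

Definition is_model {H S X} (A : prealgebra H S) (L : theory H S X) : Prop :=
  forall G p, L G p -> sat_seq A G p.

Section TermAlgebra.
Variables (H : frame) (S : signature) (X : Type) (L : theory H S X).

Definition tsim (t s : term S X) : Prop := provable L (FEq t s).

Definition TermsL : Type :=
  { P : term S X -> Prop | exists t, P = tsim t }.

Definition qcls (t : term S X) : TermsL := exist _ (tsim t) (ex_intro _ t erefl).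

Definition rep (c : TermsL) : term S X :=
  proj1_sig (constructive_indefinite_description _ (proj2_sig c)).

Definition muL (c : TermsL) : H :=
  fsup (fun l => provable L (FMem l (rep c))).

Definition opL (f : sO S) (a : 'I_(sar f) -> TermsL) : TermsL :=
  qcls (App f (fun i => rep (a i))).

Definition TL : prealgebra H S := PreAlgebra muL opL (fun c => qcls (Cst c)).

Definition ican (x : X) : TermsL := qcls (Var x).

End TermAlgebra.
Arguments qcls {H S X L}.
Arguments sat_at {H S X} A io p.
Arguments sat {H S X} A p.
Arguments ican {H S X} L x.

(* The term algebra is the Lindenbaum-Tarski algebra of L: the class of a
   term t is the set of terms provably equal to t, and its membership degree
   is the supremum of the l with |-_L E_l(t).  Rule (Sup) makes that supremum
   itself provable, and (Mon) then gives back every smaller degree, so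
   membership in T_L holds exactly when it is provable.  For any assignment
   represented termwise by a substitution s, evaluating a term in T_L gives the
   class of the substituted term, hence satisfaction at that assignment is
   provability of the substituted formula; (Sub) and (Cut) transfer this from
   the canonical assignment to all assignments and to the sequents of L. *)

From mathcomp Require Import ssreflect ssrfun ssrbool eqtype ssrnat fintype.
From Stdlib Require Import ClassicalEpsilon FunctionalExtensionality.
From Stdlib Require Import PropExtensionality ProofIrrelevance.

Set Implicit Arguments.
Unset Strict Implicit.

Lemma fmeet2_idPr (H : frame) (a b : H) : fle b a -> fmeet2 a b = b.
Proof.
move=> le_ba; apply: fle_antisym; first exact: fmeet2_lb2.
exact: fmeet2_glb le_ba (fle_refl b).
Qed.

Lemma tsubst_Var (S : signature) (X : Type) (t : term S X) : tsubst Var t = t.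
Proof.
elim: t => [x|c|f ts IH] //=; congr App.
by apply: functional_extensionality => i; exact: IH.
Qed.

Lemma fsubst_Var (H : frame) (S : signature) (X : Type) (p : formula H S X) :
  fsubst Var p = p.
Proof. by case: p => [a b|l a] /=; rewrite !tsubst_Var. Qed.

Section TermAlgebraTheory.
Variables (H : frame) (S : signature) (X : Type) (L : theory H S X).

Lemma provable_subst (s : X -> term S X) p :
  provable L p -> provable L (fsubst s p).
Proof.
move=> Hp; apply: (D_Cut (P := ssubst s emptyset)); last exact: D_Sub.
by move=> q [? [[]]].
Qed.

Lemma tsim_refl t : tsim L t t.
Proof. exact: D_Refl. Qed.

Lemma tsim_sym t s : tsim L t s -> tsim L s t.
Proof. exact: D_Sym. Qed.

Lemma tsim_trans t s u : tsim L t s -> tsim L s u -> tsim L t u.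
Proof. exact: D_Trans. Qed.

Lemma TermsL_val_inj (c1 c2 : TermsL L) : proj1_sig c1 = proj1_sig c2 -> c1 = c2.
Proof.
case: c1 c2 => [P1 p1] [P2 p2] /= eP; subst P2.
by rewrite (proof_irrelevance _ p1 p2).
Qed.

Lemma eq_qcls t s : qcls (L := L) t = qcls s <-> tsim L t s.
Proof.
split=> [eq_ts | sim_ts].
  by rewrite [tsim L t](f_equal (@proj1_sig _ _) eq_ts); exact: tsim_refl.
apply: TermsL_val_inj => /=; apply: functional_extensionality => u.
apply: propositional_extensionality.
by split; [apply: tsim_trans (tsim_sym sim_ts) | apply: tsim_trans sim_ts].
Qed.

Lemma repK (c : TermsL L) : qcls (rep c) = c.
Proof.
rewrite /rep; case: constructive_indefinite_description => r /= Er.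
by apply: TermsL_val_inj; rewrite /= Er.
Qed.

Lemma tsim_rep_qcls t : tsim L (rep (qcls (L := L) t)) t.
Proof. by apply/eq_qcls; rewrite repK. Qed.

Lemma provable_FMem_tsim t s l :
  tsim L t s -> provable L (FMem l t) -> provable L (FMem l s).
Proof. exact: D_Fun. Qed.

Lemma muL_qcls t : muL (qcls (L := L) t) = fsup (fun l => provable L (FMem l t)).
Proof.
rewrite /muL; congr fsup; apply: functional_extensionality => l.
apply: propositional_extensionality; split; apply: provable_FMem_tsim.
  exact: tsim_rep_qcls.
exact: tsim_sym (tsim_rep_qcls t).
Qed.

Lemma opL_qcls f (ts : 'I_(sar f) -> term S X) :
  opL (fun i => qcls (L := L) (ts i)) = qcls (App f ts).
Proof. by apply/eq_qcls; apply: D_Cong => i; exact: tsim_rep_qcls. Qed.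

Lemma provable_FMem_sup t :
  provable L (FMem (fsup (fun l => provable L (FMem l t))) t).
Proof. exact: D_Sup. Qed.

Lemma fle_sup_provable t l :
  fle l (fsup (fun l => provable L (FMem l t))) <-> provable L (FMem l t).
Proof.
split=> [le_l_sup | ]; last exact: fsup_ub.
by rewrite -(fmeet2_idPr le_l_sup); apply: D_Mon; exact: provable_FMem_sup.
Qed.

Lemma TL_is_algebra : is_algebra (TL L).
Proof.
move=> f a; rewrite /= /opL muL_qcls; apply: fsup_ub.
by apply: D_Exp => i; exact: provable_FMem_sup.
Qed.

Section Represented.
Variables (io : X -> TermsL L) (s : X -> term S X).
Hypothesis s_represents_io : forall x, qcls (s x) = io x.

Lemma eval_TL_subst t : eval (A := TL L) io t = qcls (tsubst s t).
Proof.
elim: t => [x|c|f ts IH] //=; rewrite -opL_qcls; congr opL.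
by apply: functional_extensionality => i; exact: IH.
Qed.

Lemma sat_at_TL_subst p : sat_at (TL L) io p <-> provable L (fsubst s p).
Proof.
case: p => [a b|l a] /=; rewrite !eval_TL_subst; first exact: eq_qcls.
by rewrite /= muL_qcls; exact: fle_sup_provable.
Qed.

End Represented.

Lemma sat_at_ican p : sat_at (TL L) (ican L) p <-> provable L p.
Proof. by rewrite -{2}(fsubst_Var p); apply: sat_at_TL_subst. Qed.

Lemma sat_TL_provable p : provable L p -> sat (TL L) p.
Proof.
move=> Hp io; apply/(sat_at_TL_subst (fun x => repK (io x))).
exact: provable_subst.
Qed.

Lemma TL_is_model : is_model (TL L) L.
Proof.
move=> G p LGp io sat_G; have io_rep x := repK (io x).
apply/(sat_at_TL_subst io_rep).
apply: (D_Cut (P := ssubst (fun x => rep (io x)) G)).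
  by move=> _ [q [Gq ->]]; apply/(sat_at_TL_subst io_rep); exact: sat_G.
by apply: D_Sub; exact: D_theory.
Qed.

End TermAlgebraTheory.

Theorem lemma25 (H : frame) (S : signature) (X : Type) (L : theory H S X) :
  (* ~_L is an equivalence relation *)
  ((forall t, tsim L t t) /\
   (forall t s, tsim L t s -> tsim L s t) /\
   (forall t s u, tsim L t s -> tsim L s u -> tsim L t u)) /\
  (* T_L is well defined: mu_L and f^T_L are independent of representatives *)
  (forall t : term S X,
     amu (TL L) (qcls t) = fsup (fun l => provable L (FMem l t))) /\
  (forall (f : sO S) (ts : 'I_(sar f) -> term S X),
     aop (TL L) f (fun i => qcls (ts i)) = qcls (App f ts)) /\
  (* ... and is a Sigma-algebra *)
  is_algebra (TL L) /\
  (* (1) *)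
  (forall p : formula H S X,
     (sat (TL L) p <-> sat_at (TL L) (ican L) p) /\
     (sat_at (TL L) (ican L) p <-> provable L p)) /\
  (* (2) *)
  (forall (io : X -> TermsL L) (sg : TermsL L -> term S X),
     (forall c, qcls (sg c) = c) ->
     forall p : formula H S X,
       sat_at (TL L) io p <-> provable L (fsubst (fun x => sg (io x)) p)) /\
  (* (3) *)
  is_model (TL L) L.
Proof.
split; first by split; [|split]; [exact: tsim_refl | exact: tsim_sym | exact: tsim_trans].
split; first exact: muL_qcls.
split; first exact: opL_qcls.
split; first exact: TL_is_algebra.
split.
  move=> p; split; last exact: sat_at_ican.
  by split=> [/(_ (ican L)) | /sat_at_ican /sat_TL_provable].
split; last exact: TL_is_model.
by move=> io sg sgK p; apply: sat_at_TL_subst.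
Qed.
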